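(* For every $t\in\mathbb{N}$ and $C>0$ there is $\varepsilon_0>0$ such that the following holds for every integer $m\ge 3$. If $0<\varepsilon<\varepsilon_0$ and $\mathcal{G},\mathcal{H}\subset[m]^n$ satisfy $\mu(\mathcal{H})=m^{-t}\varepsilon$ and $\mu(\mathcal{G})>1-C\varepsilon$, then ${\sf agr}(x,y)=0$ for some $x\in\mathcal{G}$ and $y\in\mathcal{H}$.
   Context: $[m]=\{1,\dots,m\}$, $\mu$ is the uniform probability measure on $[m]^n$, and ${\sf agr}(x,y)=|\{i\in[n]:x_i=y_i\}|$. *)

From mathcomp Require Import all_boot all_order all_algebra.
From mathcomp Require Import reals.
Set Implicit Arguments. Unset Strict Implicit. Unset Printing Implicit Defensive.
Import Order.TTheory GRing.Theory Num.Theory.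
Local Open Scope ring_scope.

(* The cube [m]^n, with [m] represented by 'I_m = {0,...,m-1}. *)
Definition cube (m n : nat) := {ffun 'I_n -> 'I_m}.

Definition mu (R : realType) (m n : nat) (A : {set cube m n}) : R :=
  (#|A|%:R) / ((m ^ n)%N%:R).

Definition agr (m n : nat) (x y : cube m n) : nat :=
  #|[set i : 'I_n | x i == y i]|.

From mathcomp Require Import all_boot all_order all_algebra.
From mathcomp Require Import reals.
From mathcomp Require Import ring lra.

(* Let far H be the set of points disagreeing in every coordinate with some
   point of H.  Slicing [m]^n along the first coordinate, the slice of far H at
   b contains far (slice H a) for every a != b; by induction on n and an
   elementary power-mean inequality this gives mu H <= (mu (far H))^(m-1).
   If no point of G disagrees everywhere with a point of H, then G and far H
   are disjoint, so mu (far H) < C eps and eps m^-t <= (C eps)^(m-1).  Since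
   m^t <= 2^(t(m-1)) and m - 1 >= 2, this fails once eps ((C+1) 2^t)^2 < 1. *)

Set Implicit Arguments.
Unset Strict Implicit.
Unset Printing Implicit Defensive.
Import Order.TTheory GRing.Theory Num.Theory.
Local Open Scope ring_scope.

Lemma bernoulli_ler (R : realDomainType) (X e : R) n : 0 <= e -> e <= X ->
  X ^+ n * (X - n.+1%:R * e) <= (X - e) ^+ n.+1.
Proof.
move=> e_ge0 eX; have X_ge0 : 0 <= X by exact: le_trans eX.
elim: n => [|n IHn]; first by rewrite expr0 mul1r expr1 mul1r.
rewrite [(X - e) ^+ n.+2]exprS; apply: le_trans (ler_wpM2l _ IHn).
  rewrite -subr_ge0.
  have -> : (X - e) * (X ^+ n * (X - n.+1%:R * e)) - X ^+ n.+1 * (X - n.+2%:R * e)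
      = n.+1%:R * e ^+ 2 * X ^+ n by rewrite exprS -!natr1; ring.
  by rewrite !mulr_ge0 ?exprn_ge0.
by rewrite subr_ge0.
Qed.

Lemma mean_expr_ler (R : realDomainType) k (a b : R) : 0 <= b -> b <= a ->
  k.+1%:R ^+ k.-1 * (a ^+ k + k%:R * b ^+ k) <= (k%:R * a + b) ^+ k.
Proof.
move=> b_ge0 ba; case: k => [|k] /=; first by rewrite !expr0 mul0r addr0 mulr1.
have a_ge0 : 0 <= a by exact: le_trans ba.
have ab_ge0 : 0 <= a - b by rewrite subr_ge0.
have ab_le : a - b <= k.+2%:R * a.
  by rewrite mulr_natl mulrS; have := mulrn_wge0 k.+1 a_ge0; lra.
have := bernoulli_ler k ab_ge0 ab_le.
have -> : k.+2%:R * a - (a - b) = k.+1%:R * a + b by rewrite -!natr1; ring.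
have -> : k.+2%:R * a - k.+1%:R * (a - b) = a + k.+1%:R * b by rewrite -!natr1; ring.
apply: le_trans; rewrite exprMn -mulrA ler_wpM2l ?exprn_ge0 // mulrDr -exprSr lerD2l.
by rewrite mulrCA ler_wpM2l // exprSr ler_wpM2r // lerXn2r.
Qed.

Local Close Scope ring_scope.

Lemma leq_expn2r m n e : m <= n -> m ^ e <= n ^ e.
Proof. by case: e => // e mn; rewrite leq_exp2r. Qed.

Lemma mean_expn_leq k (a b c : nat) : b <= a -> k * a + b <= c ->
  k.+1 ^ k.-1 * (a ^ k + k * b ^ k) <= c ^ k.
Proof.
move=> ba kab_le_c; rewrite -(ler_nat int) !(natrM, natrX, natrD).
have ba_int : (b%:R <= a%:R :> int)%R by rewrite ler_nat.
apply: le_trans (mean_expr_ler k (ler0n _ b) ba_int) _.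
by rewrite lerXn2r ?nnegrE -?natrM -?natrD ?ler0n ?ler_nat.
Qed.

Lemma leq_sum_expn_dominated k (f s : 'I_k.+1 -> nat) :
    (forall a b, a != b -> f a <= s b) ->
  k.+1 ^ k.-1 * \sum_a f a ^ k <= (\sum_b s b) ^ k.
Proof.
move=> f_le_s; have [a0 _ f_le_fa0] := @arg_maxnP _ ord0 xpredT f isT.
set A := f a0 in f_le_fa0 *.
(* Every f b with b != a0 is at most minn (s a0) A, while the s b with
   b != a0 each dominate A. *)
have sum_off_a0 x : \sum_(b | b != a0) x = k * x.
  by rewrite sum_nat_const cardC1 card_ord.
apply: leq_trans (mean_expn_leq (geq_minr (s a0) A) _).
  rewrite leq_pmul2l ?expn_gt0 // (bigD1 a0) //= leq_add2l -sum_off_a0.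
  apply: leq_sum => b ba0; apply: leq_expn2r.
  by rewrite leq_min f_le_s //; apply: f_le_fa0.
rewrite (bigD1 a0) //= addnC; apply: leq_add; first exact: geq_minl.
by rewrite -sum_off_a0; apply: leq_sum => b ba0; rewrite f_le_s // eq_sym.
Qed.

Section Slices.

Variables m n : nat.

Definition ccons (a : 'I_m) (x : cube m n) : cube m n.+1 :=
  [ffun i => if unlift ord0 i is Some j then x j else a].

Definition ctail (x : cube m n.+1) : cube m n := [ffun j => x (lift ord0 j)].

Lemma ccons0 a x : ccons a x ord0 = a.
Proof. by rewrite ffunE unlift_none. Qed.

Lemma cconsS a x j : ccons a x (lift ord0 j) = x j.
Proof. by rewrite ffunE liftK. Qed.

Lemma cconsK (x : cube m n.+1) : ccons (x ord0) (ctail x) = x.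
Proof.
by apply/ffunP => i; rewrite ffunE; case: unliftP => [j ->|->] //; rewrite ffunE.
Qed.

Lemma ctailK a x : ctail (ccons a x) = x.
Proof. by apply/ffunP => j; rewrite ffunE cconsS. Qed.

Definition slice (A : {set cube m n.+1}) (a : 'I_m) : {set cube m n} :=
  [set x | ccons a x \in A].

Lemma card_slice (A : {set cube m n.+1}) : #|A| = \sum_a #|slice A a|.
Proof.
rewrite -sum1_card (reindex (fun p : 'I_m * cube m n => ccons p.1 p.2)) /=.
  rewrite -(pair_big_dep xpredT (fun a x => ccons a x \in A) (fun _ _ => 1)) /=.
  by apply: eq_bigr => a _; rewrite sum1dep_card.
exists (fun x : cube m n.+1 => (x ord0, ctail x)) => [[a x] _ | x _] /=.
  by rewrite ccons0 ctailK.
exact: cconsK.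
Qed.

End Slices.

Definition far m n (H : {set cube m n}) : {set cube m n} :=
  [set x | [exists y in H, agr x y == 0]].

Lemma agr0P m n (x y : cube m n) : reflect (forall i, x i != y i) (agr x y == 0).
Proof.
apply: (iffP eqP) => [agr0 i | neq_xy].
  by have := card0_eq agr0 i; rewrite !inE => /negbT.
by apply: eq_card0 => i; rewrite !inE; apply/negbTE/neq_xy.
Qed.

Lemma far_cube0 m (H : {set cube m 0}) : far H = H.
Proof.
apply/setP => x; rewrite inE; apply/existsP/idP => [[y /andP[yH _]] | xH].
  by have -> : x = y by apply/ffunP => -[].
by exists x; rewrite xH; apply/agr0P => -[].
Qed.

Lemma far_slice m n (H : {set cube m n.+1}) a b :
  a != b -> far (slice H a) \subset slice (far H) b.
Proof.
move=> ab; apply/subsetP => x; rewrite !inE => /existsP[y /andP[yH /agr0P xy]].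
rewrite inE in yH; apply/existsP; exists (ccons a y); rewrite yH /=.
apply/agr0P => i; case: (unliftP ord0 i) => [j ->|->]; first by rewrite !cconsS.
by rewrite !ccons0 eq_sym.
Qed.

Lemma card_far k n (H : {set cube k.+1 n}) :
  #|H| * (k.+1 ^ n) ^ k.-1 <= #|far H| ^ k.
Proof.
elim: n H => [|n IHn] H.
  rewrite far_cube0 expn0 exp1n muln1.
  have := max_card (mem H); rewrite card_ffun !card_ord expn0.
  by case: #|_| => [|[|]] //; rewrite exp1n.
have dominated a b : a != b -> #|far (slice H a)| <= #|slice (far H) b|.
  by move=> ab; apply/subset_leq_card/far_slice.
rewrite (card_slice (far H)); apply: leq_trans (leq_sum_expn_dominated dominated).
rewrite card_slice big_distrl big_distrr /=; apply: leq_sum => a _.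
by rewrite expnS expnMn mulnCA leq_mul2l IHn orbT.
Qed.

Local Open Scope ring_scope.

Lemma mu_le_mu_far (R : realType) k n (H : {set cube k.+2 n}) :
  mu R H <= mu R (far H) ^+ k.+1.
Proof.
have M_gt0 : 0 < (k.+2 ^ n)%:R :> R by rewrite ltr0n expn_gt0.
rewrite /mu expr_div_n ler_pdivlMr ?exprn_gt0 // exprS mulrA divfK ?gt_eqF //.
by rewrite -!natrX -natrM ler_nat card_far.
Qed.

Lemma mu_disjoint_le1 (R : realType) m n (A B : {set cube m n}) :
  [disjoint A & B] -> mu R A + mu R B <= 1.
Proof.
move=> AB; rewrite /mu -mulrDl -natrD.
have := (leq_card_setU A B).2; rewrite AB => /eqP <-.
have [-> | M_gt0] := posnP (m ^ n); first by rewrite invr0 mulr0.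
rewrite ler_pdivrMr ?ltr0n // mul1r ler_nat.
by have := max_card (mem (A :|: B)); rewrite card_ffun !card_ord.
Qed.

Lemma small_eps_expr_lt (R : realFieldType) t k (C eps : R) :
    0 <= C -> 0 < eps -> eps * ((C + 1) * 2%:R ^+ t) ^+ 2 < 1 ->
  (C * eps) ^+ k.+2 * k.+3%:R ^+ t < eps.
Proof.
move=> C_ge0 eps_gt0; set u : R := 2%:R ^+ t; set v := (C + 1) * u => eps_v_lt1.
have eps_ge0 := ltW eps_gt0.
have u_ge1 : 1 <= u by rewrite exprn_ege1 // ler1n.
have u_ge0 : 0 <= u := le_trans ler01 u_ge1.
have v_ge1 : 1 <= v by rewrite /v; nra.
have v_ge0 : 0 <= v := le_trans ler01 v_ge1.
have veps_lt1 : v * eps < 1.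
  apply: le_lt_trans eps_v_lt1.
  by rewrite [v * eps]mulrC expr2 mulrA ler_peMr // mulr_ge0.
have Ceu_ge0 : 0 <= C * eps * u by rewrite !mulr_ge0.
have Ceu_le : C * eps * u <= v * eps by rewrite /v; nra.
have m_le_u : k.+3%:R ^+ t <= u ^+ k.+2 :> R.
  rewrite -exprM mulnC exprM lerXn2r ?nnegrE ?ler0n ?exprn_ge0 //.
  by rewrite -natrX ler_nat ltn_expl.
apply: le_lt_trans (ler_wpM2l (exprn_ge0 _ (mulr_ge0 C_ge0 eps_ge0)) m_le_u) _.
rewrite -exprMn; apply: le_lt_trans (_ : (v * eps) ^+ 2 < eps).
  apply: le_trans (ler_wiXn2l Ceu_ge0 _ (_ : 2 <= k.+2)%N) _ => //; first by lra.
  by rewrite lerXn2r ?nnegrE // mulr_ge0.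
by nra.
Qed.

Unset Implicit Arguments.

Theorem theorem2p3 (R : realType) (t : nat) (C : R) (hC : 0 < C) :
  exists eps0 : R, 0 < eps0 /\
    forall (m n : nat), (3 <= m)%N ->
    forall (eps : R), 0 < eps -> eps < eps0 ->
    forall (G H : {set cube m n}),
      mu R H = eps / ((m%:R : R) ^+ t) ->
      mu R G > 1 - C * eps ->
      exists x, exists y, [/\ x \in G, y \in H & agr x y = 0%N].
Proof.
pose v : R := (C + 1) * 2%:R ^+ t.
have v_gt0 : 0 < v by rewrite mulr_gt0 ?addr_gt0 ?exprn_gt0.
exists (v ^- 2); split=> [|m n m_ge3 eps eps_gt0 eps_lt G H muH muG].
  by rewrite invr_gt0 exprn_gt0.
have [GfarH | ] := boolP [disjoint G & far H]; last first.
  rewrite -setI_eq0 => /set0Pn[x]; rewrite !inE => /andP[xG /exists_inP[y yH /eqP]].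
  by exists x, y.
exfalso; case: m m_ge3 G H muH muG GfarH => [|[|[|k]]] // _ G H muH muG GfarH.
have eps_v : eps * v ^+ 2 < 1 by rewrite -ltr_pdivlMr ?exprn_gt0 // div1r.
have mu_far_lt : mu R (far H) < C * eps by have := mu_disjoint_le1 R GfarH; lra.
have mu_far_ge0 : 0 <= mu R (far H) by rewrite divr_ge0 ?ler0n.
have Ceps_gt0 : 0 < C * eps by rewrite mulr_gt0.
have : eps / k.+3%:R ^+ t <= (C * eps) ^+ k.+2.
  rewrite -muH; apply: le_trans (mu_le_mu_far R H) _.
  by rewrite lerXn2r ?nnegrE // ?ltW.
rewrite ler_pdivrMr ?exprn_gt0 ?ltr0n // leNgt.
by rewrite small_eps_expr_lt ?ltW.
Qed.
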